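(* For every positive integer $n$ with $n\ne2,6$, there exist a $(2,3,n)$-AONT and a $(1,3,n)$-AONT.
   Context: Let $X$ be a finite alphabet with $|X|=v$ and $0\le t\le s$. A $(t,s,v)$-AONT is a bijection $\phi:X^s\to X^s$ such that for every $I\subseteq\{1,\dots,s\}$ with $|I|=t$ and every $J\subseteq\{1,\dots,s\}$ with $|J|=s-t$, the map $x\mapsto\big((x_i)_{i\in I},(\phi(x)_j)_{j\in J}\big)$ is a bijection $X^s\to X^t\times X^{s-t}$. *)

From mathcomp Require Import all_boot.
Set Implicit Arguments. Unset Strict Implicit. Unset Printing Implicit Defensive.

(* Words of length s over alphabet X: X^s as finite functions 'I_s -> X,
   coordinates indexed 0..s-1 (paper: 1..s). *)
Definition word (X : finType) (s : nat) := {ffun 'I_s -> X}.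

Definition restr (X : finType) (s : nat) (I : {set 'I_s}) (x : word X s)
  : {ffun {i : 'I_s | i \in I} -> X} :=
  [ffun i => x (val i)].

Definition is_AONT (X : finType) (t s : nat) (phi : word X s -> word X s) : Prop :=
  t <= s /\ bijective phi /\
  forall I J : {set 'I_s}, #|I| = t -> #|J| = s - t ->
    bijective (fun x : word X s => (restr I x, restr J (phi x))).

Definition AONT_exists (t s v : nat) : Prop :=
  exists (X : finType) (phi : word X s -> word X s), #|X| = v /\ is_AONT t phi.

From mathcomp Require Import all_boot all_algebra finfield.
From mathcomp Require Import ring.

(* A (2,3)-AONT on X^3 amounts to three ternary operations on X, each
   injective in every argument (a latin cube), whose joint map is injective:
   two known inputs and one known output then determine the missing input.
   Inverting a (2,3)-AONT gives a (1,3)-AONT, and AONTs over X and Y combine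
   coordinatewise into one over X * Y.  Write n = 2^e m with m odd.  For
   m > 1 the maps a+b+c, a-b+c, a+b-c over Z_m work, and for e >= 2 the maps
   a+b+c, a+tb+c, a+b+tc over GF(2^e) with t <> 0, 1.  Over F_2 every 3x3
   matrix with unit entries is singular, so e = 1 needs a nonlinear
   construction: on bool * Z_m put hat (a, u) = u + a and
     twist psi x y z = (x.1 + y.1 + z.1 + psi (x.2 + hat y + hat z),
                        x.2 + hat y - hat z),
   with psi depending on the parity of its argument and on whether it is 0.
   The Z_m-parts of the three cyclically rotated outputs add up to the sum B
   of the Z_m-parts of the inputs; knowing B, the input bits are recovered by
   a finite check over the five possible parity/zero patterns of B, B+1, B+2
   (here m odd is used), and then the Z_m-parts since 2 is invertible. *)

Set Implicit Arguments. Unset Strict Implicit. Unset Printing Implicit Defensive.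
Import GRing.Theory.

Section Criteria.
Variables (X : finType) (s : nat).
Implicit Types (phi psi : word X s -> word X s) (x : word X s).

Definition determines t phi :=
  forall I J : {set 'I_s}, #|I| = t -> #|J| = s - t ->
  forall x x', {in I, x =1 x'} -> {in J, phi x =1 phi x'} -> x = x'.

Lemma is_AONTP t phi :
  is_AONT t phi <-> [/\ t <= s, injective phi & determines t phi].
Proof.
split=> [[t_le_s [phi_bij restr_bij]] | [t_le_s phi_inj phi_det]].
  split=> // [|I J It Jt x x' eqI eqJ]; first exact: bij_inj.
  apply: (bij_inj (restr_bij I J It Jt)); congr pair; apply/ffunP => i.
    by rewrite !ffunE eqI ?(valP i).
  by rewrite !ffunE eqJ ?(valP i).
split=> //; split=> [|I J It Jt]; first exact: injF_bij.
apply: inj_card_bij => [x x' [/ffunP eqI /ffunP eqJ] | ].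
  apply: (phi_det I J It Jt) => [i iI | j jJ].
    by have := eqI (exist _ i iI); rewrite !ffunE.
  by have := eqJ (exist _ j jJ); rewrite !ffunE.
have card_sub (A : {set 'I_s}) : #|{: {i : 'I_s | i \in A}}| = #|A|.
  by rewrite card_sig; apply: eq_card.
by rewrite card_prod !card_ffun !card_sub It Jt card_ord -expnD subnKC.
Qed.

Lemma is_AONT_inverse t phi psi :
  cancel phi psi -> cancel psi phi -> is_AONT t phi -> is_AONT (s - t) psi.
Proof.
move=> phiK psiK /is_AONTP [t_le_s _ phi_det].
apply/is_AONTP; split=> [||I J It Jt x x' eqI eqJ]; first exact: leq_subr.
  exact: can_inj psiK.
rewrite subKn // in Jt.
rewrite -[x]psiK -[x']psiK; congr phi.
by apply: (phi_det J I) => // i; rewrite !psiK; apply: eqI.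
Qed.

Definition latin (f : word X s -> X) :=
  forall (k : 'I_s) x x', {in [set~ k], x =1 x'} -> f x = f x' -> x k = x' k.

End Criteria.

Lemma is_AONT_latin (X : finType) s (phi : word X s.+1 -> word X s.+1) :
  injective phi -> (forall j, latin (fun x => phi x j)) -> is_AONT s phi.
Proof.
move=> phi_inj phi_latin; apply/is_AONTP; split=> // I J Is J1 x x' eqI eqJ.
have /cards1P [k Ik] : #|~: I| == 1.
  by have := cardsC I; rewrite Is card_ord => /(canRL (addKn s)) ->; rewrite subSnn.
have /cards1P [j Jj] : #|J| == 1 by rewrite J1 subSnn.
have {}eqI : {in [set~ k], x =1 x'}.
  by move=> i; rewrite -Ik setCK; apply: eqI.
apply/ffunP => i; case: (eqVneq i k) => [-> | ik]; last by apply: eqI; rewrite !inE.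
by apply: (phi_latin j _ _ _ eqI); apply: eqJ; rewrite Jj set11.
Qed.

Lemma AONT_exists_inverse t s v : AONT_exists t s v -> AONT_exists (s - t) s v.
Proof.
move=> [X [phi [Xv phiA]]]; have [_ [[psi phiK psiK] _]] := phiA.
by exists X, psi; split=> //; apply: is_AONT_inverse phiK psiK phiA.
Qed.

Lemma AONT_exists1 t s : t <= s -> AONT_exists t s 1.
Proof.
move=> t_le_s; exists unit, id; split; first exact: card_unit.
have word_unit (x x' : word unit s) : x = x'.
  by apply/ffunP => i; case: (x i); case: (x' i).
by apply/is_AONTP; split=> // [x x' _ | I J _ _ x x' _ _]; apply: word_unit.
Qed.

Section Product.
Variables (X Y : finType) (s : nat).

Definition wfst (x : word (X * Y)%type s) : word X s := [ffun i => (x i).1].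
Definition wsnd (x : word (X * Y)%type s) : word Y s := [ffun i => (x i).2].
Definition wpair (u : word X s) (v : word Y s) : word (X * Y)%type s :=
  [ffun i => (u i, v i)].

Lemma word_pair_eq x x' : wfst x = wfst x' -> wsnd x = wsnd x' -> x = x'.
Proof.
move=> /ffunP eq1 /ffunP eq2; apply/ffunP => i.
by move: (eq1 i) (eq2 i); rewrite !ffunE; apply: injective_projections.
Qed.

Lemma is_AONT_pair t phi psi : is_AONT t phi -> is_AONT t psi ->
  is_AONT t (fun x => wpair (phi (wfst x)) (psi (wsnd x))).
Proof.
move=> /is_AONTP [t_le_s phi_inj phi_det] /is_AONTP [_ psi_inj psi_det].
have wfst_pair u v : wfst (wpair u v) = u by apply/ffunP => i; rewrite !ffunE.
have wsnd_pair u v : wsnd (wpair u v) = v by apply/ffunP => i; rewrite !ffunE.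
apply/is_AONTP; split=> // [x x' eqx | I J It Jt x x' eqI eqJ].
  apply: word_pair_eq; [apply: phi_inj | apply: psi_inj].
    by have := congr1 wfst eqx; rewrite !wfst_pair.
  by have := congr1 wsnd eqx; rewrite !wsnd_pair.
apply: word_pair_eq.
  apply: (phi_det I J) => // i iA; first by rewrite !ffunE eqI.
  by have := eqJ i iA; rewrite !ffunE => -[-> _].
apply: (psi_det I J) => // i iA; first by rewrite !ffunE eqI.
by have := eqJ i iA; rewrite !ffunE => -[_ ->].
Qed.

End Product.

Lemma AONT_exists_mul t s a b :
  AONT_exists t s a -> AONT_exists t s b -> AONT_exists t s (a * b).
Proof.
move=> [X [phi [Xa phiA]]] [Y [psi [Yb psiA]]].
exists (X * Y)%type, (fun x => wpair (phi (wfst x)) (psi (wsnd x))).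
by split; [rewrite card_prod Xa Yb | exact: is_AONT_pair].
Qed.

Section Ternary.
Variable T : Type.
Implicit Types f g h : T -> T -> T -> T.

Definition latin3 f :=
  [/\ forall a a' b c, f a b c = f a' b c -> a = a',
      forall a b b' c, f a b c = f a b' c -> b = b' &
      forall a b c c', f a b c = f a b c' -> c = c'].

Definition injective3 f g h :=
  forall a b c a' b' c', f a b c = f a' b' c' -> g a b c = g a' b' c' ->
    h a b c = h a' b' c' -> [/\ a = a', b = b' & c = c'].

Lemma latin3_rotl f : latin3 f -> latin3 (fun a b c => f b c a).
Proof. by case=> f1 f2 f3; split=> ? ? ? ?; [exact: f3 | exact: f1 | exact: f2]. Qed.

Lemma latin3_rotr f : latin3 f -> latin3 (fun a b c => f c a b).
Proof. by case=> f1 f2 f3; split=> ? ? ? ?; [exact: f2 | exact: f3 | exact: f1]. Qed.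

End Ternary.

Definition i0 : 'I_3 := @Ordinal 3 0 isT.
Definition i1 : 'I_3 := @Ordinal 3 1 isT.
Definition i2 : 'I_3 := @Ordinal 3 2 isT.

Lemma ord3P (k : 'I_3) : [\/ k = i0, k = i1 | k = i2].
Proof.
by case: k => [[|[|[|//]]] ?]; [constructor 1 | constructor 2 | constructor 3];
  apply: val_inj.
Qed.

Section TernaryWords.
Variable X : finType.
Implicit Types f g h : X -> X -> X -> X.

Definition ternary f (x : word X 3) := f (x i0) (x i1) (x i2).

Definition triple_map f g h (x : word X 3) : word X 3 :=
  [ffun j => ternary (tnth [tuple f; g; h] j) x].

Lemma latin_ternary f : latin3 f -> latin (ternary f).
Proof.
case=> f1 f2 f3 k x x' eqx; rewrite /ternary.
case: (ord3P k) eqx => -> eqx.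
- by rewrite (eqx i1) ?(eqx i2) ?inE //; apply: f1.
- by rewrite (eqx i0) ?(eqx i2) ?inE //; apply: f2.
- by rewrite (eqx i0) ?(eqx i1) ?inE //; apply: f3.
Qed.

Lemma AONT23_latin3 f g h :
  latin3 f -> latin3 g -> latin3 h -> injective3 f g h -> AONT_exists 2 3 #|X|.
Proof.
move=> f_latin g_latin h_latin fgh_inj.
exists X, (triple_map f g h); split=> //; apply: is_AONT_latin.
  move=> x x' /ffunP eqx.
  have [e0 e1 e2] : [/\ x i0 = x' i0, x i1 = x' i1 & x i2 = x' i2].
    by apply: fgh_inj; [have := eqx i0 | have := eqx i1 | have := eqx i2]; rewrite !ffunE.
  by apply/ffunP => k; case: (ord3P k) => ->.
move=> j k x x' eqx; rewrite !ffunE.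
case: (ord3P j) => ->; exact: latin_ternary.
Qed.

End TernaryWords.

Section Linear.
Local Open Scope ring_scope.
Variables (R : comUnitRingType) (t : R).
Hypotheses (t_unit : t \is a GRing.unit) (t1_unit : t - 1 \is a GRing.unit).

Definition lin0 (a b c : R) := a + b + c.
Definition lin1 (a b c : R) := a + t * b + c.
Definition lin2 (a b c : R) := a + b + t * c.

Lemma lin0_latin3 : latin3 lin0.
Proof. by split=> > /=; [move/addIr/addIr | move/addIr/addrI | move/addrI]. Qed.

Lemma lin1_latin3 : latin3 lin1.
Proof.
by split=> > /=; [move/addIr/addIr | move/addIr/addrI/(mulrI t_unit) | move/addrI].
Qed.

Lemma lin2_latin3 : latin3 lin2.
Proof.
by split=> > /=; [move/addIr/addIr | move/addIr/addrI | move/addrI/(mulrI t_unit)].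
Qed.

Lemma lin_injective3 : injective3 lin0 lin1 lin2.
Proof.
move=> a b c a' b' c' e0 e1 e2.
have /(mulrI t1_unit) eb : (t - 1) * b = (t - 1) * b'.
  transitivity (lin1 a b c - lin0 a b c); first by rewrite /lin1 /lin0; ring.
  by rewrite e0 e1 /lin1 /lin0; ring.
have /(mulrI t1_unit) ec : (t - 1) * c = (t - 1) * c'.
  transitivity (lin2 a b c - lin0 a b c); first by rewrite /lin2 /lin0; ring.
  by rewrite e0 e2 /lin2 /lin0; ring.
by split=> //; move: e0; rewrite /lin0 eb ec => /addIr/addIr.
Qed.

End Linear.

Section RingInstances.
Local Open Scope ring_scope.

Lemma AONT23_ring (R : finComUnitRingType) (t : R) :
  t \is a GRing.unit -> t - 1 \is a GRing.unit -> AONT_exists 2 3 #|R|.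
Proof.
move=> t_unit t1_unit.
exact: AONT23_latin3 (lin0_latin3 R) (lin1_latin3 t_unit) (lin2_latin3 t_unit)
  (lin_injective3 t1_unit).
Qed.

Lemma AONT23_odd m : odd m -> AONT_exists 2 3 m.
Proof.
move=> m_odd.
have [-> | m_gt1] : m = 1%N \/ (1 < m)%N by case: m m_odd => [|[|m]] // _; [left | right].
  exact: AONT_exists1.
have := @AONT23_ring 'Z_m (-1) (unitrN1 _); rewrite card_ord Zp_cast //; apply.
by rewrite -opprD unitrN -mulr2n -mulr_natl mulr1 unitZpE // coprimen2.
Qed.

Lemma AONT23_pow2 e : (1 < e)%N -> AONT_exists 2 3 (2 ^ e).
Proof.
move=> e_gt1; have [F _ cardF] := @pPrimePowerField 2 e isT (ltnW e_gt1).
have /subsetPn [t _] : ~~ ([set: F] \subset [set 0; 1]).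
  apply/negP => /subset_leq_card; rewrite cardsT cards2 eq_sym oner_eq0 cardF.
  by rewrite leqNgt (ltn_exp2l 1) // e_gt1.
rewrite !inE negb_or => /andP [t_neq0 t_neq1]; rewrite -cardF.
by apply: (@AONT23_ring _ t); rewrite unitfE ?subr_eq0.
Qed.

End RingInstances.

Section Twisted.
Local Open Scope ring_scope.
Variable k : nat.
Local Notation m := k.*2.+3.
Local Notation Zm := 'Z_m.
Implicit Types (x y z : bool * Zm) (B : Zm).

Definition hat x : Zm := x.2 + x.1%:R.
Definition profile (u : Zm) : bool * bool := (odd u, u == 0).

Definition twist (ps : bool * bool -> bool) x y z : bool * Zm :=
  (x.1 (+) y.1 (+) z.1 (+) ps (profile (x.2 + hat y + hat z)), x.2 + hat y - hat z).

Lemma hat_inj x y : x.1 = y.1 -> hat x = hat y -> x = y.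
Proof. by move=> e1; rewrite /hat e1 => /addIr; apply: injective_projections. Qed.

Lemma twist_latin3 ps : latin3 (twist ps).
Proof.
split=> [x x' y z | x y y' z | x y z z']; rewrite /twist => /pair_equal_spec [ec ed].
- have e2 : x.2 = x'.2 by move/addIr/addIr: ed.
  have e1 : x.1 = x'.1 by move: ec; rewrite e2 => /addIb/addIb/addIb.
  exact: injective_projections.
- have eh : hat y = hat y' by move/addIr/addrI: ed.
  have e1 : y.1 = y'.1 by move: ec; rewrite eh => /addIb/addIb/addbI.
  exact: hat_inj e1 eh.
- have eh : hat z = hat z' by move/addrI/oppr_inj: ed.
  have e1 : z.1 = z'.1 by move: ec; rewrite eh => /addIb/addbI.
  exact: hat_inj e1 eh.
Qed.

Definition psi0 (b : bool * bool) := b.1 (+) b.2.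
Definition tw0 x0 x1 x2 := twist psi0 x0 x1 x2.
Definition tw1 x0 x1 x2 := twist fst x1 x2 x0.
Definition tw2 x0 x1 x2 := twist snd x2 x0 x1.

Definition window B := [seq profile (B + i%:R) | i <- iota 0 3].

(* The value of window B when B is 0, m - 1, m - 2, or an odd, resp. even,
   element of [1, m - 3]. *)
Definition windows : seq (seq (bool * bool)) :=
  [:: [:: (false, true); (true, false); (false, false)];
      [:: (false, false); (false, true); (true, false)];
      [:: (true, false); (false, false); (false, true)];
      [:: (true, false); (false, false); (true, false)];
      [:: (false, false); (true, false); (false, false)]].

Lemma val_add_nat B i : val (B + i%:R) = ((B + i) %% m)%N.
Proof. by rewrite /= val_Zp_nat // modnDmr. Qed.

Lemma window_cases B : window B \in windows.
Proof.
have profile_nat i : profile (B + i%:R) = (odd ((B + i) %% m), (B + i) %% m == 0)%N.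
  by rewrite /profile -val_add_nat.
rewrite /window /= !profile_nat addn0 addn1 addn2.
move: (nat_of_ord B) (ltn_ord B) => v v_lt_m.
have [-> | v_gt0] := posnP v; first by rewrite !modn_small.
case: (ltngtP v k.*2.+1) => [v_lt | v_gt | ->].
- have v2_lt_m : (v.+2 < m)%N := v_lt.
  rewrite (modn_small (ltnW (ltnW v2_lt_m))) (modn_small (ltnW v2_lt_m)).
  rewrite (modn_small v2_lt_m) /= negbK eqn0Ngt v_gt0.
  by case: (odd v).
- have -> : v = k.*2.+2 by apply/eqP; rewrite eqn_leq v_gt -ltnS v_lt_m.
  by rewrite modn_small // modnn -[k.*2.+4]/(1 + m)%N modnDr /= odd_double.
- by rewrite modn_small // modn_small // modnn /= odd_double.
Qed.

Definition code (w : seq (bool * bool)) (a : bool * bool * bool) :=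
  let: (a0, a1, a2) := a in
  let par := a0 (+) a1 (+) a2 in
  let pat i := nth (false, false) w i in
  (par (+) psi0 (pat (a1 + a2)%N), par (+) (pat (a2 + a0)%N).1,
   par (+) (pat (a0 + a1)%N).2).

Lemma code_inj : {in windows, forall w, injective (code w)}.
Proof.
move=> w; rewrite !inE => /or4P [| | | /orP []] /eqP ->;
  by move=> [[[] []] []] [[[] []] []].
Qed.

Lemma window_nth B i : (i < 3)%N -> nth (false, false) (window B) i = profile (B + i%:R).
Proof. by move=> i_lt3; rewrite (nth_map 0%N) ?size_iota // nth_iota. Qed.

Lemma twist_code x0 x1 x2 (B := x0.2 + x1.2 + x2.2) :
  ((tw0 x0 x1 x2).1, (tw1 x0 x1 x2).1, (tw2 x0 x1 x2).1) =
  code (window B) (x0.1, x1.1, x2.1).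
Proof.
have bit_sum_lt3 (a b : bool) : (a + b < 3)%N by case: a; case: b.
have shift u y z : u + hat y + hat z = u + y.2 + z.2 + (y.1 + z.1)%N%:R.
  by rewrite /hat natrD; ring.
have B1 : x1.2 + x2.2 + x0.2 = B by rewrite /B; ring.
have B2 : x2.2 + x0.2 + x1.2 = B by rewrite /B; ring.
have par1 : x1.1 (+) x2.1 (+) x0.1 = x0.1 (+) x1.1 (+) x2.1 by rewrite addbC addbA.
have par2 : x2.1 (+) x0.1 (+) x1.1 = x0.1 (+) x1.1 (+) x2.1 by rewrite -addbA addbC.
by rewrite /code !window_nth // /tw0 /tw1 /tw2 /twist !shift B1 B2 par1 par2.
Qed.

Lemma twist_snd ps x y z : (twist ps x y z).2 = x.2 + hat y - hat z.
Proof. by []. Qed.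

Lemma twist_sum x0 x1 x2 :
  (tw0 x0 x1 x2).2 + (tw1 x0 x1 x2).2 + (tw2 x0 x1 x2).2 = x0.2 + x1.2 + x2.2.
Proof. by rewrite !twist_snd /hat; ring. Qed.

Lemma twist_double x0 x1 x2 :
  [/\ x0.2 *+ 2 = (tw0 x0 x1 x2).2 + (tw2 x0 x1 x2).2 - x0.1%:R + x2.1%:R,
      x1.2 *+ 2 = (tw1 x0 x1 x2).2 + (tw0 x0 x1 x2).2 - x1.1%:R + x0.1%:R &
      x2.2 *+ 2 = (tw2 x0 x1 x2).2 + (tw1 x0 x1 x2).2 - x2.1%:R + x1.1%:R].
Proof. by split; rewrite !twist_snd /hat; ring. Qed.

Lemma double_inj : injective (fun u : Zm => u *+ 2).
Proof.
have two_unit : (2%:R : Zm) \is a GRing.unit.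
  by rewrite unitZpE // coprimen2 /= odd_double.
by move=> u v; rewrite /= -[u *+ 2]mulr_natr -[v *+ 2]mulr_natr => /(mulIr two_unit).
Qed.

Lemma twist_injective3 : injective3 tw0 tw1 tw2.
Proof.
move=> x0 x1 x2 x0' x1' x2' e0 e1 e2.
have eB : x0.2 + x1.2 + x2.2 = x0'.2 + x1'.2 + x2'.2.
  by rewrite -twist_sum e0 e1 e2 twist_sum.
have [] : (x0.1, x1.1, x2.1) = (x0'.1, x1'.1, x2'.1).
  apply: (code_inj (window_cases (x0.2 + x1.2 + x2.2))).
  by rewrite -twist_code eB -twist_code e0 e1 e2.
move=> a0 a1 a2; have [d0 d1 d2] := twist_double x0 x1 x2.
have [d0' d1' d2'] := twist_double x0' x1' x2'.
move: d0 d1 d2; rewrite e0 e1 e2 a0 a1 a2 -d0' -d1' -d2'.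
move=> /double_inj u0 /double_inj u1 /double_inj u2.
by split; apply: injective_projections.
Qed.

Lemma AONT23_twisted : AONT_exists 2 3 m.*2.
Proof.
have := @AONT23_latin3 _ tw0 tw1 tw2 (twist_latin3 psi0)
  (latin3_rotl (twist_latin3 fst)) (latin3_rotr (twist_latin3 snd)) twist_injective3.
by rewrite card_prod card_bool card_ord mul2n.
Qed.

End Twisted.

Lemma AONT23_double_odd m : odd m -> (1 < m)%N -> AONT_exists 2 3 m.*2.
Proof.
move=> m_odd m_gt1; have [k ->] : exists k, m = k.*2.+3.
  move: (odd_double_half m) m_gt1; rewrite m_odd.
  by case: m./2 => [<- // | h <- _]; exists h.
exact: AONT23_twisted.
Qed.

Theorem corollary3p8 (n : nat) :
  0 < n -> n <> 2 -> n <> 6 -> AONT_exists 2 3 n /\ AONT_exists 1 3 n.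
Proof.
move=> n_gt0 n_neq2 _.
suff AONT23n : AONT_exists 2 3 n by split; last exact: AONT_exists_inverse AONT23n.
have [m m_coprime2 n_eq] := pfactor_coprime (isT : prime 2) n_gt0.
have m_odd : odd m by rewrite -coprimen2 coprime_sym.
move: n_neq2; rewrite n_eq; case: (logn 2 n) => [|[|e]] n_neq2.
- by rewrite muln1; apply: AONT23_odd.
- rewrite expn1 muln2 in n_neq2 *; apply: AONT23_double_odd => //.
  by case: m m_odd n_neq2 {m_coprime2 n_eq} => [|[|m]] // _ /(_ erefl).
- by rewrite mulnC; apply: AONT_exists_mul; [apply: AONT23_pow2 | apply: AONT23_odd].
Qed.
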